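(* There exists $A\in(0,\infty)$ depending only on the coefficients of the polynomial $P$ such that for all $\tau\in\mathbb{R}$ and $c\in(1,\infty)$ it holds $P(\tau,c)\ge \tau^n/(2n)-A\,c^{n/2}$.
   Context: $n\in2\mathbb{N}_+$, $n\ge4$; $P(\tau)=\sum_{m=0}^na_m\tau^m$ with $a_0,\dots,a_{n-1}\in\mathbb{R}$, $a_n=1/n$; and $P(\tau,c)=\sum_{m=0}^n a_m\sum_{k=0}^{\lfloor m/2\rfloor}\frac{(-1)^k m!}{(m-2k)!k!2^k}c^k\tau^{m-2k}$. *)

From HB Require Import structures.
From mathcomp Require Import all_boot all_order all_algebra.
From mathcomp Require Export reals.
Set Implicit Arguments. Unset Strict Implicit. Unset Printing Implicit Defensive.
Import Order.TTheory GRing.Theory Num.Theory.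
Local Open Scope ring_scope.

Definition Pc (R : realType) (n : nat) (a : nat -> R) (tau c : R) : R :=
  \sum_(m < n.+1) a m *
    \sum_(k < (m./2).+1)
      ((-1) ^+ k * (m`!)%:R / (((m - 2 * k)%N`!)%:R * (k`!)%:R * 2 ^+ k))
        * c ^+ k * tau ^+ (m - 2 * k).

From mathcomp Require Import all_boot all_order all_algebra reals.
From mathcomp Require Import ring lra zify.
Set Implicit Arguments. Unset Strict Implicit. Unset Printing Implicit Defensive.
Import Order.TTheory GRing.Theory Num.Theory.
Local Open Scope ring_scope.

(* Proof idea: P(tau, c) = tau^n/n + (terms a c^k tau^j with j + 2k <= n and
   j < n).  With s = sqrt c >= 1 and a large parameter M, each such monomial is
   at most M^n s^n + |tau|^n / M: if |tau| <= M s the first summand dominates,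
   otherwise the second one does.  Taking M of order n times the sum K of the
   absolute values of those coefficients, the total contribution of the terms
   in |tau|^n / M is at most tau^n/(2n), and the rest is K M^n c^(n/2). *)

Section MixedMonomials.
Variable R : realType.
Implicit Types s t M : R.

Lemma mixed_power_le_split n j s t M : 1 <= s -> 0 <= t -> 1 <= M -> (j < n)%N ->
  s ^+ (n - j) * t ^+ j <= M ^+ n * s ^+ n + t ^+ n / M.
Proof.
move=> s1 t0 M1 jn.
have M0 : 0 < M by lra.
have Ms0 : 0 <= M * s by apply: mulr_ge0; lra.
have ns : n = (n - j + j)%N by lia.
have lower_ge0 : 0 <= t ^+ n / M by apply: divr_ge0; [exact: exprn_ge0 | lra].
have upper_ge0 : 0 <= M ^+ n * s ^+ n by apply: mulr_ge0; apply: exprn_ge0; lra.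
have [t_small | t_large] := leP t (M * s).
- have s0 : 0 <= s by lra.
  have tj : t ^+ j <= (M * s) ^+ j by rewrite lerXn2r ?nnegrE.
  have Mj : M ^+ j <= M ^+ n by rewrite ler_weXn2l //; lia.
  have : s ^+ (n - j) * t ^+ j <= M ^+ n * s ^+ n.
    apply: (le_trans (ler_wpM2l (exprn_ge0 _ s0) tj)).
    by rewrite exprMn mulrCA -exprD -ns ler_wpM2r ?exprn_ge0.
  lra.
- suff : s ^+ (n - j) * t ^+ j <= t ^+ n / M by lra.
  rewrite ler_pdivlMr // mulrC.
  have tnj : (M * s) ^+ (n - j) <= t ^+ (n - j) by rewrite lerXn2r ?nnegrE //; lra.
  have MM : M <= M ^+ (n - j) by rewrite ler_eXnr //; lia.
  rewrite {2}ns exprD mulrA ler_wpM2r ?exprn_ge0 //.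
  apply: le_trans tnj; rewrite exprMn ler_wpM2r ?exprn_ge0 //; lra.
Qed.

Lemma mixed_power_le n i j s t M : 1 <= s -> 0 <= t -> 1 <= M ->
  (j < n)%N -> (i + j <= n)%N -> s ^+ i * t ^+ j <= M ^+ n * s ^+ n + t ^+ n / M.
Proof.
move=> s1 t0 M1 jn ijn; apply: le_trans (mixed_power_le_split s1 t0 M1 jn).
by rewrite ler_wpM2r ?exprn_ge0 // ler_weXn2l //; lia.
Qed.

End MixedMonomials.

Section HermiteExpansion.
Variable R : realType.

(* [Pc n a tau c = \sum_m a m * c^(m/2) He_m(tau / sqrt c)], where [He_m] is the
   probabilists' Hermite polynomial with coefficients [hermite_coef m k]. *)
Definition hermite_coef (m k : nat) : R :=
  (-1) ^+ k * (m`!)%:R / (((m - 2 * k)%N`!)%:R * (k`!)%:R * 2 ^+ k).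

Lemma hermite_coef0 m : hermite_coef m 0 = 1.
Proof.
rewrite /hermite_coef !expr0 muln0 subn0 fact0 !mul1r !mulr1 divff //.
by rewrite pnatr_eq0 -lt0n fact_gt0.
Qed.

Variables (n : nat) (a : nat -> R).

Definition lower_term (m k : nat) (tau c : R) : R :=
  a m * (hermite_coef m k * c ^+ k * tau ^+ (m - 2 * k)).

Lemma Pc_split_lead tau c : Pc n a tau c =
  a n * tau ^+ n
  + \sum_(m < n) \sum_(k < (m./2).+1) lower_term m k tau c
  + \sum_(k < n./2) lower_term n k.+1 tau c.
Proof.
rewrite /Pc big_ord_recr /= big_ord_recl /= mulrDr -/(hermite_coef n 0).
rewrite hermite_coef0 expr0 muln0 subn0 !mul1r mulr_sumr addrCA addrA.
by congr (_ + _ + _); apply: eq_bigr => m _; rewrite mulr_sumr.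
Qed.

Definition lower_coef_sum : R :=
  \sum_(m < n) \sum_(k < (m./2).+1) `|a m * hermite_coef m k|
  + \sum_(k < n./2) `|a n * hermite_coef n k.+1|.

Lemma lower_coef_sum_ge0 : 0 <= lower_coef_sum.
Proof. by apply: addr_ge0; apply: sumr_ge0 => m _ //; apply: sumr_ge0. Qed.

Section Bound.
Variables (M tau c : R).
Hypotheses (M1 : 1 <= M) (c1 : 1 <= c).

Let E := M ^+ n * Num.sqrt c ^+ n + `|tau| ^+ n / M.

Lemma lower_term_ge m k : (m <= n)%N -> (k <= m./2)%N -> (m < n)%N || (0 < k)%N ->
  - (`|a m * hermite_coef m k| * E) <= lower_term m k tau c.
Proof.
move=> mn km lower.
have k2m : (2 * k <= m)%N by move: (odd_double_half m); rewrite -mul2n; lia.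
have c0 : 0 <= c := le_trans ler01 c1.
have sqrt_c : Num.sqrt c ^+ 2 = c by rewrite sqr_sqrtr.
have s1 : 1 <= Num.sqrt c by rewrite -sqrtr1 ler_sqrt.
apply: lerNnormlW; rewrite /lower_term; move: (hermite_coef m k) => C.
rewrite !normrM -!mulrA ler_wpM2l // ler_wpM2l // !normrX ger0_norm //.
by rewrite -sqrt_c -exprM mixed_power_le //; lia.
Qed.

Lemma Pc_ge_lead : a n * tau ^+ n - lower_coef_sum * E <= Pc n a tau c.
Proof.
rewrite Pc_split_lead /lower_coef_sum mulrDl opprD -addrA lerD2l.
apply: lerD.
- rewrite mulr_suml -sumrN; apply: ler_sum => m _.
  rewrite mulr_suml -sumrN; apply: ler_sum => k _.
  by apply: lower_term_ge; [exact: ltnW | rewrite -ltnS | rewrite ltn_ord].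
- rewrite mulr_suml -sumrN; apply: ler_sum => k _.
  by apply: lower_term_ge; rewrite ?orbT.
Qed.

End Bound.
End HermiteExpansion.

Lemma even_exprn_norm (R : realDomainType) (n : nat) (x : R) :
  ~~ odd n -> `|x| ^+ n = x ^+ n.
Proof.
move=> ev; rewrite -[n](even_halfK ev) -mul2n !exprM real_normK //.
exact: num_real.
Qed.

Lemma sqrt_exprn_even (R : realType) (n : nat) (c : R) : 0 <= c -> ~~ odd n ->
  Num.sqrt c ^+ n = c ^+ n./2.
Proof.
by move=> c0 ev; rewrite -{1}[n](even_halfK ev) -mul2n exprM sqr_sqrtr.
Qed.

Lemma mulr_div_affine_le (R : realFieldType) (K N T : R) :
  0 <= K -> 0 < N -> 0 <= T -> K * (T / (2 * N * K + 1)) <= T / (2 * N).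
Proof.
move=> K0 N0 T0; have D0 : 0 < 2 * N * K + 1 by have := mulr_ge0 (ltW N0) K0; lra.
rewrite mulrCA ler_wpM2l //.
have -> : K / (2 * N * K + 1) = (2 * N)^-1 - (2 * N)^-1 / (2 * N * K + 1).
  by field; rewrite (lt0r_neq0 N0) (lt0r_neq0 D0).
rewrite lerBlDr lerDl divr_ge0 // ?invr_ge0; lra.
Qed.

Theorem mainTheorem3 (R : realType) (n : nat) (a : nat -> R) :
  ~~ odd n -> (4 <= n)%N -> a n = (n%:R)^-1 ->
  exists A : R, 0 < A /\
    forall tau c : R, 1 < c ->
      tau ^+ n / (2 * n)%:R - A * c ^+ (n./2) <= Pc n a tau c.
Proof.
move=> ev n4 an.
set K := lower_coef_sum n a; have K0 : 0 <= K := lower_coef_sum_ge0 n a.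
have N0 : 0 < n%:R :> R by rewrite ltr0n; lia.
pose M := 2 * n%:R * K + 1.
have M1 : 1 <= M by have := mulr_ge0 (ltW N0) K0; rewrite /M; lra.
have MnK0 : 0 <= K * M ^+ n by apply: mulr_ge0 => //; apply: exprn_ge0; lra.
exists (K * M ^+ n + 1); split=> [|tau c c1]; first lra.
have c0 : 0 <= c by lra.
have := Pc_ge_lead n a tau M1 (ltW c1).
rewrite an even_exprn_norm // sqrt_exprn_even // natrM.
set T := tau ^+ n; set C := c ^+ n./2.
have T0 : 0 <= T by rewrite /T -(even_exprn_norm _ ev) exprn_ge0.
have C0 : 0 <= C by rewrite exprn_ge0.
have small : K * (T / M) <= T / (2 * n%:R) by rewrite mulr_div_affine_le.
have half : n%:R^-1 * T = T / (2 * n%:R) + T / (2 * n%:R) by field; lra.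
have expand : (K * M ^+ n + 1) * C = K * (M ^+ n * C) + C by ring.
rewrite -/K half expand mulrDr; lra.
Qed.
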